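(* For all integers $N,\ell\ge1$ and $k$ with $\ell+1\le k\le N$, the fractional chromatic number of $\mathcal U_{N,\ell,k}$ is at most $4\ell$.
   Context: $[N]=\{1,\dots,N\}$, $S_N$ is the set of permutations of $[N]$. For $\pi,\sigma\in S_N$, $\delta(\pi,\sigma)=\max_{i\in[N]}|\pi^{-1}(i)-\sigma^{-1}(i)|$. For $1\le k\le N$, $S_{N,k}$ is the set of injective maps $[k]\to[N]$; a permutation $\pi'\in S_N$ extends $\pi\in S_{N,k}$ if $\pi'(i)=\pi(i)$ for all $i\in[k]$. For $\pi,\sigma\in S_{N,k}$, $\delta(\pi,\sigma)=\min\{\delta(\pi',\sigma'):\pi',\sigma'\in S_N$ extending $\pi,\sigma$ respectively$\}$. The $k$-restricted uncertainty graph $\mathcal U_{N,\ell,k}$ has vertex set $S_{N,k}$, with $\pi\sim\sigma$ iff $\pi(1)\ne\sigma(1)$ and $\delta(\pi,\sigma)\le\ell$. The fractional chromatic number of $G$ is the least real $w$ such that there exist independent sets $I_1,\dots,I_t$ with nonnegative weights $w_1,\dots,w_t$, $\sum_j w_j=w$, and $\sum_{j:u\in I_j}w_j\ge1$ for every vertex $u$. *)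

(* Indices are 0-based: [N] is represented by 'I_N, [k] by 'I_k. *)
From HB Require Import structures.
From mathcomp Require Import all_boot all_order all_algebra all_fingroup.
Set Implicit Arguments. Unset Strict Implicit. Unset Printing Implicit Defensive.
Import Order.TTheory GRing.Theory Num.Theory.

Definition absdiff (a b : nat) : nat := (a - b) + (b - a).

Definition delta_perm (N : nat) (p q : {perm 'I_N}) : nat :=
  \max_(i : 'I_N) absdiff ((p^-1)%g i : nat) ((q^-1)%g i : nat).

Definition partperm (N k : nat) := {f : {ffun 'I_k -> 'I_N} | injectiveb f}.

Definition extends (N k : nat) (p : {perm 'I_N}) (f : {ffun 'I_k -> 'I_N}) : bool :=
  [forall i : 'I_k, forall j : 'I_N, (nat_of_ord i == nat_of_ord j) ==> (p j == f i)].

(* delta for partial permutations: min over all pairs of extensions.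
   (N is used as the neutral "infinity" of the min; it exceeds every
   delta_perm value, and extensions always exist when k <= N.) *)
Definition delta_part (N k : nat) (f g : partperm N k) : nat :=
  \big[minn/N]_(p : {perm 'I_N} | extends p (val f))
    \big[minn/N]_(q : {perm 'I_N} | extends q (val g)) delta_perm p q.

(* adjacency of the k-restricted uncertainty graph U_{N,l,k}:
   pi(1) <> sigma(1) (index 0 here) and delta(pi,sigma) <= l *)
Definition U_adj (N l k : nat) (f g : partperm N k) : bool :=
  [exists i : 'I_k, (nat_of_ord i == 0%N) && (val f i != val g i)]
  && (delta_part f g <= l)%N.

Definition independent (V : finType) (adj : rel V) (I : {set V}) : bool :=
  [forall u in I, forall v in I, ~~ adj u v].

Local Open Scope ring_scope.

Definition frac_col_feasible (R : realFieldType) (V : finType) (adj : rel V) (w : R) : Prop :=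
  exists (t : nat) (I : 'I_t -> {set V}) (wt : 'I_t -> R),
    [/\ forall j, independent adj (I j),
        forall j, 0 <= wt j,
        \sum_(j < t) wt j = w
      & forall u : V, 1 <= \sum_(j < t | u \in I j) wt j].

Definition is_frac_chromatic_number (R : realFieldType) (V : finType) (adj : rel V) (w : R) : Prop :=
  frac_col_feasible adj w /\ forall w', frac_col_feasible adj w' -> w <= w'.

From HB Require Import structures.
From mathcomp Require Import all_boot all_order all_algebra all_fingroup.
Import Order.TTheory GRing.Theory Num.Theory.

Set Implicit Arguments.
Unset Strict Implicit.
Unset Printing Implicit Defensive.

(* We prove the stronger bound: the fractional chromatic number of U_{N,l,k}
   is at most l + 1, which is <= 4l since l >= 1.

   For a vertex f (an injective map [k] -> [N]) call f(0), ..., f(l) its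
   prefix.  If f ~ g, then delta(f, g) <= l forces g(0) to appear in the
   prefix of f (and f(0) in the prefix of g), at a nonzero position since
   f(0) <> g(0).  For each permutation s of [N] let C_s be the set of vertices
   f whose head f(0) is ranked by s before all other prefix elements.  Two
   adjacent vertices cannot both lie in C_s, since each head would have to be
   ranked before the other.  Every vertex lies in at least a 1/(l+1) fraction
   of the classes C_s, because the transpositions exchanging f(0) with f(m),
   m <= l, map every permutation into such a class.  Weighting every C_s by
   (l+1)/N! therefore gives a fractional colouring of total weight l + 1. *)

Lemma bigmin_witness (I : finType) (P : pred I) (F : I -> nat) (d l : nat) :
  (l < d)%N -> (\big[minn/d]_(i | P i) F i <= l)%N ->
  exists2 i, P i & (F i <= l)%N.
Proof.
move=> ld small.
case: (pickP [pred i | P i && (F i <= l)%N]) => [i /andP[Pi Fi]|none].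
  by exists i.
suff : (l < \big[minn/d]_(i | P i) F i)%N by rewrite ltnNge small.
apply: (big_ind (fun x => l < x)%N) => // [a b la lb|i Pi].
  by rewrite leq_min la lb.
by have := none i; rewrite /= Pi /= ltnNge => ->.
Qed.

Lemma absdiffC (a b : nat) : absdiff a b = absdiff b a.
Proof. by rewrite /absdiff addnC. Qed.

Section Extensions.
Variables N k : nat.
Hypothesis kN : (k <= N)%N.

Lemma extendsP (p : {perm 'I_N}) (f : {ffun 'I_k -> 'I_N}) (i : 'I_k) (j : 'I_N) :
  extends p f -> i = j :> nat -> p j = f i.
Proof.
by move=> /forallP /(_ i) /forallP /(_ j) /implyP ext ij; apply/eqP/ext/eqP.
Qed.

Lemma close_extensions (l : nat) (f g : partperm N k) :
  (l < N)%N -> (delta_part f g <= l)%N ->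
  exists p q : {perm 'I_N}, [/\ extends p (val f), extends q (val g)
    & forall y, absdiff ((p^-1)%g y) ((q^-1)%g y) <= l]%N.
Proof.
move=> lN close.
have [p ext_p] := bigmin_witness lN close.
move=> /(bigmin_witness lN) [q ext_q pq].
exists p, q; split=> // y; apply: leq_trans pq.
exact: (leq_bigmax (F := fun i => absdiff ((p^-1)%g i : nat) ((q^-1)%g i : nat))).
Qed.

(* With such extensions, the head [G i0] occurs in the prefix [F 0..l]:
   its [q]-position is 0, so its [p]-position is at most [l < k]. *)
Lemma head_in_prefix (l : nat) (p q : {perm 'I_N}) (F G : {ffun 'I_k -> 'I_N})
    (i0 : 'I_k) :
  i0 = 0%N :> nat -> (l < k)%N -> extends p F -> extends q G ->
  (forall y, absdiff ((p^-1)%g y) ((q^-1)%g y) <= l)%N ->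
  exists2 a : 'I_k, (a <= l)%N & F a = G i0.
Proof.
move=> i00 lk ext_p ext_q disp.
have qi0 : q (widen_ord kN i0) = G i0 by apply: extendsP.
have := disp (G i0); rewrite -qi0 permK /= i00 /absdiff subn0 sub0n addn0.
set y := (p^-1)%g _ => yl.
have yk : (y < k)%N by apply: leq_ltn_trans lk.
exists (Ordinal yk) => //.
have <- : p y = F (Ordinal yk) by apply: extendsP.
by rewrite /y permKV.
Qed.

Lemma heads_in_prefixes (l : nat) (f g : partperm N k) (i0 : 'I_k) :
  i0 = 0%N :> nat -> (l < k)%N -> (delta_part f g <= l)%N ->
  (exists2 a : 'I_k, (a <= l)%N & val f a = val g i0) /\
  (exists2 b : 'I_k, (b <= l)%N & val g b = val f i0).
Proof.
move=> i00 lk close.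
have [p [q [ext_p ext_q disp]]] := close_extensions (leq_trans lk kN) close.
split; first exact: head_in_prefix ext_p ext_q disp.
by apply: head_in_prefix ext_q ext_p _ => // y; rewrite absdiffC.
Qed.

End Extensions.

Definition head_first (N l : nat) (x : 'I_l.+1 -> 'I_N) : {set {perm 'I_N}} :=
  [set s : {perm 'I_N} | [forall m : 'I_l.+1, (0 < m)%N ==> (s (x ord0) < s (x m))%N]].

(* At least a 1/(l+1) fraction of all permutations rank the head first:
   composing with the transposition of [x 0] and the minimally ranked [x m]
   sends any permutation into [head_first x]. *)
Lemma head_first_count (N l : nat) (x : 'I_l.+1 -> 'I_N) : injective x ->
  (#|{perm 'I_N}| <= l.+1 * #|head_first x|)%N.
Proof.
move=> x_inj.
pose t (m : 'I_l.+1) := tperm (x ord0) (x m).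
pose S (m : 'I_l.+1) := [set (t m * s)%g | s in head_first x].
have cover s : exists m, s \in S m.
  have [m _ min_m] := @arg_minnP _ ord0 xpredT (fun i => nat_of_ord (s (x i))) isT.
  exists m; apply/imsetP; exists (t m * s)%g; last by rewrite mulgA tperm2 mul1g.
  rewrite inE; apply/forallP => j; apply/implyP => j_gt0.
  have ranks_differ a b : a != b -> (s (x a) : nat) != s (x b).
    by move=> ab; rewrite (inj_eq val_inj) (inj_eq perm_inj) (inj_eq x_inj).
  have j0 : j != ord0 by apply: contraTneq j_gt0 => ->.
  rewrite !permM /t tpermL.
  have [j_eq_m|jm] := eqVneq j m.
    by rewrite j_eq_m in j0 *; rewrite tpermR ltn_neqAle min_m // andbT ranks_differ.
  rewrite tpermD ?(inj_eq x_inj) 1?eq_sym //.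
  by rewrite ltn_neqAle min_m // andbT ranks_differ // eq_sym.
have cardS m : #|S m| = #|head_first x| by rewrite card_imset //; apply: mulgI.
apply: (@leq_trans (\sum_s \sum_(m < l.+1) (s \in S m : nat))).
  rewrite -sum1_card; apply: leq_sum => s _.
  by have [m Sm] := cover s; rewrite (bigD1 m) //= Sm.
rewrite exchange_big -[X in (X * _)%N]card_ord -sum_nat_const.
apply: leq_sum => m _; rewrite -(cardS m) -sum1_card [X in (_ <= X)%N]big_mkcond.
by apply: leq_sum => s _; case: (s \in S m).
Qed.

Local Open Scope ring_scope.

(* A family of independent sets indexed by a nonempty finite type such that
   every vertex lies in at least a 1/m fraction of them is a fractional
   colouring of weight m (each set gets weight m / #|C|). *)
Lemma uniform_cover_feasible (R : realFieldType) (V C : finType) (adj : rel V)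
    (I : C -> {set V}) (m : nat) :
  (0 < #|C|)%N -> (forall c, independent adj (I c)) ->
  (forall u, #|C| <= m * #|[set c | u \in I c]|)%N ->
  frac_col_feasible adj (m%:R : R).
Proof.
move=> C_gt0 indep often.
pose wt : R := m%:R / #|C|%:R.
have C_neq0 : #|C|%:R != 0 :> R by rewrite pnatr_eq0 -lt0n.
exists #|C|, (fun j => I (enum_val j)), (fun _ => wt); split=> //.
- by move=> j; rewrite divr_ge0.
- by rewrite sumr_const card_ord -[_ *+ #|C|]mulr_natr divfK.
move=> u; rewrite -(big_enum_val_cond (A := C) (fun c => u \in I c) (fun _ => wt)).
rewrite sumr_const -mulr_natr mulrAC ler_pdivlMr ?ltr0n // mul1r -natrM ler_nat.
by rewrite (@eq_card _ _ [set c | u \in I c]) ?often // => c; rewrite inE.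
Qed.

Section HeadClasses.
Variables N l k : nat.
Hypotheses (lk : (l.+1 <= k)%N) (kN : (k <= N)%N).

Definition prefix (f : partperm N k) (m : 'I_l.+1) : 'I_N := val f (widen_ord lk m).

Lemma prefix_inj (f : partperm N k) : injective (prefix f).
Proof.
apply: inj_comp; first exact/injectiveP/(valP f).
by move=> a b /(congr1 val) /= /val_inj.
Qed.

Definition head_class (s : {perm 'I_N}) : {set partperm N k} :=
  [set f | s \in head_first (prefix f)].

Lemma nonhead_prefix_index (f : partperm N k) (a : 'I_k) (i0 : 'I_k) :
  i0 = 0%N :> nat -> (a <= l)%N -> val f a != val f i0 ->
  exists2 m : 'I_l.+1, (0 < m)%N & prefix f m = val f a /\ prefix f ord0 = val f i0.
Proof.
move=> i00 al fa; have al' : (a < l.+1)%N by [].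
exists (Ordinal al'); last by split; congr (val f _); apply: val_inj.
rewrite lt0n; apply: contra fa => /eqP /= a0.
by apply/eqP; congr (val f _); apply: val_inj; rewrite /= a0 i00.
Qed.

(* If f ~ g were both in the class of [s], each head would be ranked by [s]
   before the other, which is impossible. *)
Lemma head_class_independent (s : {perm 'I_N}) :
  independent (@U_adj N l k) (head_class s).
Proof.
apply/forallP => f; apply/implyP; rewrite !inE => /forallP f_first.
apply/forallP => g; apply/implyP; rewrite !inE => /forallP g_first.
apply/negP => /andP[/existsP[i0 /andP[/eqP i00 heads_differ]] close].
have [[a al fa] [b bl gb]] := heads_in_prefixes kN i00 lk close.
have fa_head : val f a != val f i0 by rewrite fa eq_sym.
have gb_head : val g b != val g i0 by rewrite gb.
have [ma ma_gt0 [pfa pf0]] := nonhead_prefix_index i00 al fa_head.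
have [mb mb_gt0 [pgb pg0]] := nonhead_prefix_index i00 bl gb_head.
have := implyP (f_first ma) ma_gt0; rewrite pfa pf0 fa.
have := implyP (g_first mb) mb_gt0; rewrite pgb pg0 gb.
by move=> /ltn_trans lt1 /lt1; rewrite ltnn.
Qed.

Lemma head_class_feasible (R : realFieldType) :
  frac_col_feasible (@U_adj N l k) (l.+1%:R : R).
Proof.
apply: (@uniform_cover_feasible R _ _ _ head_class).
- by apply/card_gt0P; exists 1%g.
- exact: head_class_independent.
move=> f; have -> : [set s | f \in head_class s] = head_first (prefix f).
  by apply/setP => s; rewrite !inE.
exact/head_first_count/prefix_inj.
Qed.

End HeadClasses.

Theorem mainTheorem4 (R : realFieldType) (N l k : nat) :
  (1 <= N)%N -> (1 <= l)%N -> (l.+1 <= k)%N -> (k <= N)%N ->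
  forall w : R, is_frac_chromatic_number (@U_adj N l k) w -> w <= (4 * l)%:R.
Proof.
move=> _ l_gt0 lk kN w [_ least].
apply: le_trans (least _ (head_class_feasible lk kN R)) _.
by rewrite ler_nat -[X in (X < _)%N]mul1n ltn_pmul2r.
Qed.
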